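(* Let $q$ be a prime power and $n,k,\gamma$ positive integers with $n\ge2k+\gamma$. Then $$B_q(n,k,k+\gamma;3)\ge q^{\left\lfloor\frac{n-2k+1}{k+1}\right\rfloor\left\lfloor\frac{k}{\gamma}\right\rfloor}.$$
   Context: For a prime power $q$, $\mathcal{G}_q(n,k)$ denotes the set of all $k$-dimensional subspaces of $\mathbb{F}_q^n$. An $\alpha$-$(n,k,\delta)_q^c$ covering Grassmannian code is a subset $\mathcal{C}\subseteq\mathcal{G}_q(n,k)$ (no repeated codewords) such that every set of $\alpha$ distinct codewords of $\mathcal{C}$ spans a subspace of $\mathbb{F}_q^n$ of dimension at least $k+\delta$. $B_q(n,k,\delta;\alpha)$ denotes the maximum size of an $\alpha$-$(n,k,\delta)_q^c$ code. *)

From HB Require Import structures.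
From mathcomp Require Import all_boot all_order all_algebra all_field.
Set Implicit Arguments. Unset Strict Implicit. Unset Printing Implicit Defensive.
Import GRing.Theory.
Local Open Scope ring_scope.

(* A code is a duplicate-free list of
   subspaces.  [covering_code F n k delta alpha C] : C is an
   alpha-(n,k,delta)^c covering Grassmannian code: all codewords have dimension
   k and every alpha distinct codewords span a subspace of dimension >= k+delta. *)
Definition covering_code {F : fieldType} (n k delta alpha : nat)
  (C : seq {vspace 'rV[F]_n}) : Prop :=
  [/\ uniq C,
      (forall U, U \in C -> \dim U = k) &
      (forall S : seq {vspace 'rV[F]_n},
          uniq S -> size S = alpha -> {subset S <= C} ->
          (k + delta <= \dim (\sum_(U <- S) U)%VS)%N)].

(* Let L = GF(q^k), a k-dimensional F-space, and pi : L -> F^gamma a surjective linear map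
   (gamma <= k).  For Y in L^j the codeword U_Y = {(u, (u Y_i, pi (u Y_i^2))_i) | u in L}
   is a k-dimensional subspace of a space of dimension k + j (k + gamma) <= n.  Two codewords
   meet trivially.  If U_Y3 meets U_Y1 + U_Y2 in c, i.e. a + b = c and
   a Y1_i + b Y2_i = c Y3_i for all i, then
     a Y1_i^2 + b Y2_i^2 - c Y3_i^2 = c (Y1_i - Y3_i) (Y3_i - Y2_i),
   so at a coordinate where the three Y's differ pairwise c (Y1_i - Y3_i) (Y3_i - Y2_i) lies
   in ker pi; at a coordinate where only two of them differ the intersection is trivial.
   Either way three codewords span at least 2k + gamma dimensions, and with
   j = (n - k) / (k + gamma) the q^(kj) codewords exceed the claimed bound.  For gamma > k
   the bound is 1 and a single codeword suffices. *)

From HB Require Import structures.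
From mathcomp Require Import all_boot all_order all_algebra all_field.
From mathcomp Require Import fingroup cyclic ring zify.
Set Implicit Arguments. Unset Strict Implicit. Unset Printing Implicit Defensive.
Import GRing.Theory passmx.

Lemma leq_code_exponent n k g : (0 < g)%N -> (g <= k)%N -> (2 * k + g <= n)%N ->
  (((n - 2 * k + 1) %/ (k + 1)) * (k %/ g) <= k * ((n - k) %/ (k + g)))%N.
Proof.
move=> g_gt0 le_gk le_n.
have := leq_trunc_div (n - 2 * k + 1) (k + 1).
have := @ltn_ceil (n - k) (k + g) (ltn_addl _ g_gt0).
have := leq_trunc_div k g.
set m := (_ %/ (k + 1))%N; set t := (k %/ g)%N; set j := (_ %/ (k + g))%N.
move=> le_t lt_j le_m; clearbody m t j.
have le_m_gj : (m <= g * j)%N.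
  rewrite leqNgt; apply/negP => lt_gj_m.
  have : ((g * j).+1 * (k + 1) <= m * (k + 1))%N by rewrite leq_mul2r lt_gj_m orbT.
  have : (j * k <= g * j * k)%N by nia.
  nia.
have : (m * t <= g * j * t)%N by nia.
nia.
Qed.

Local Open Scope ring_scope.

Lemma ffunPn (aT : finType) (rT : eqType) (f g : {ffun aT -> rT}) :
  reflect (exists x, f x != g x) (f != g).
Proof.
apply: (iffP idP) => [neq_fg|[x]]; last by apply: contraNneq => ->.
apply/existsP; apply: contraNT neq_fg => /existsPn eq_fg.
by apply/eqP/ffunP=> x; apply/eqP/negPn/eq_fg.
Qed.

Lemma weighted_square_defect (R : comRingType) (a b c y1 y2 y3 : R) :
  a + b = c -> a * y1 + b * y2 = c * y3 ->
  a * y1 ^+ 2 + b * y2 ^+ 2 - c * y3 ^+ 2 = c * ((y1 - y3) * (y3 - y2)).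
Proof.
move=> <- mean; apply/eqP; rewrite -subr_eq0.
have -> : a * y1 ^+ 2 + b * y2 ^+ 2 - (a + b) * y3 ^+ 2 - (a + b) * ((y1 - y3) * (y3 - y2))
    = (y1 + y2) * (a * y1 + b * y2 - (a + b) * y3) by ring.
by rewrite mean subrr mulr0.
Qed.

Lemma natr_card_finField (F : finFieldType) : #|F|%:R = 0 :> F.
Proof.
by rewrite -cardsT -FinRing.zmodXgE; apply/eqP; rewrite -order_dvdn order_dvdG ?inE.
Qed.

(* L is the splitting field of X^(q^k) - X: its q^k roots are distinct, and they are the
   fixed points of the k-th power of the Frobenius, so they form all of L. *)
Lemma fieldExt_of_dim (F : finFieldType) k : (0 < k)%N ->
  {L : fieldExtType F | \dim {:L} = k}.
Proof.
move=> k_gt0; set m := (#|F| ^ k)%N.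
have q_gt1 := finNzRing_gt1 F.
have m_gt1 : (1 < m)%N by rewrite (ltn_exp2l 0).
have m1_gt0 : (0 < m.-1)%N by rewrite -ltnS prednK // ltnW.
pose p := 'X^m - 'X.
have Dp (R : nzRingType) : p R = ('X^(m.-1) - 1) * ('X - 0).
  by rewrite subr0 mulrBl mul1r -exprSr prednK // ltnW.
have /FinSplittingFieldFor[/= L splitLp] : p F != 0.
  by rewrite Dp monic_neq0 ?rpredM ?monicXsubC ?monicXnsubC.
rewrite rmorphB rmorphXn /= map_polyX -/(p L) in splitLp.
exists L.
have [zs Dzs defL] := splitLp.
pose FL := FinFieldExtType L.
have /finField_galois_generator[/= a _ Da] : (1 <= {:L})%VS by apply: sub1v.
pose Em := fixedSpace (a ^+ k)%g; rewrite dimv1 expn1 in Da.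
have m0 : (m%:R : L) = 0.
  rewrite -(scaler_nat m (1 : L)) -in_algE natrX natr_card_finField.
  by rewrite expr0n gtn_eqF // raddf0.
have uniq_zs : uniq zs.
  rewrite -separable_prod_XsubC -(eqp_separable Dzs) Dp separable_root andbC.
  rewrite /root !hornerE subr_eq0 eq_sym expr0n gtn_eqF ?oner_eq0 //=.
  rewrite cyclotomic.separable_Xn_sub_1 // -subn1 natrB ?(ltnW m_gt1) //.
  by rewrite subr_eq0 m0 eq_sym oner_eq0.
have zs_fixed : zs =i Em.
  move=> z; rewrite -root_prod_XsubC -(eqp_root Dzs) (sameP fixedSpaceP eqP).
  rewrite /root !hornerE subr_eq0 /= /m; congr (_ == z).
  elim: (k) => [|i IHi]; first by rewrite gal_id.
  by rewrite expgSr expnSr exprM IHi galM ?Da ?memvf.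
have L_zs : FL =i zs.
  suff fixedL : Em = {:L}%VS by move=> z; rewrite zs_fixed fixedL memvf.
  apply/eqP; rewrite eqEsubv subvf -defL -[Em]subfield_closed agenvS //.
  by rewrite subv_add sub1v; apply/span_subvP=> z; rewrite zs_fixed.
have cardL : #|FL| = m.
  rewrite (eq_card L_zs); apply: succn_inj.
  rewrite (card_uniqP _) //= -(size_prod_XsubC _ id).
  by rewrite -(eqp_size Dzs) size_polyDl size_polyXn // size_polyN size_polyX.
have := card_vspace (fullv : {vspace finvect_type L}).
by rewrite card_vspacef cardL => /eqP; rewrite eqn_exp2l // => /eqP.
Qed.

Lemma dim_rV (F : fieldType) m : \dim {:'rV[F]_m} = m.
Proof. by rewrite dimvf dim_matrix mul1r. Qed.

Section ResizeCoord.
Variables (K : fieldType) (vT : vectType K) (m : nat).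
Local Notation d := (\dim {:vT}).

(* Coordinates in the canonical basis, truncated or zero-padded to length m. *)
Definition resize_coord : 'Hom(vT, 'rV[K]_m) :=
  (linfun (mulmxr (pid_mx (minn d m))) \o linfun (rVof (vbasis {:vT})))%VF.

Lemma resize_coordE v : resize_coord v = rVof (vbasis {:vT}) v *m pid_mx (minn d m).
Proof. by rewrite comp_lfunE !lfunE. Qed.

Lemma lker_resize_coord : (d <= m)%N -> lker resize_coord == 0%VS.
Proof.
move=> le_dm; apply/lker0P=> u v; rewrite !resize_coordE.
have free : row_free (pid_mx (minn d m) : 'M[K]_(d, m)).
  by rewrite /row_free rank_pid_mx ?geq_minl ?geq_minr // (minn_idPl le_dm).
by move/(row_free_inj free)/(can_inj (rVofK (vbasisP _))).
Qed.

Lemma limg_resize_coord : (m <= d)%N -> limg resize_coord = fullv.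
Proof.
move=> le_md; apply/vspaceP=> r; rewrite memvf; apply/memv_imgP.
have full : row_full (pid_mx (minn d m) : 'M[K]_(d, m)).
  by rewrite /row_full rank_pid_mx ?geq_minl ?geq_minr // (minn_idPr le_md).
have /submxP[x ->] := submx_full r full.
by exists (vecof (vbasis {:vT}) x); rewrite ?memvf // resize_coordE vecofK ?vbasisP.
Qed.
End ResizeCoord.

Lemma covering_code_small (F : fieldType) n k delta alpha (C : seq {vspace 'rV[F]_n}) :
  uniq C -> (forall U, U \in C -> \dim U = k) -> (size C < alpha)%N ->
  @covering_code F n k delta alpha C.
Proof.
move=> uniqC dimC small; split=> // S uniqS sizeS subS.
by have := uniq_leq_size uniqS subS; rewrite sizeS leqNgt small.
Qed.

Section Codewords.
Variables (F : fieldType) (L : fieldExtType F) (V : vectType F).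
Variables (pi : 'Hom(L, V)) (j : nat).
Implicit Types (Y : {ffun 'I_j -> L}) (a b c u : L).

Definition ambient := (L * {ffun 'I_j -> L * V})%type.

Lemma dim_ambient : \dim {:ambient} = (\dim {:L} + j * (\dim {:L} + \dim {:V}))%N.
Proof. by rewrite !dimvf; congr (_ + _)%N; rewrite /dim /= card_ord. Qed.

Definition codeword_map Y u : ambient := (u, [ffun i => (u * Y i, pi (u * Y i ^+ 2))]).

Fact codeword_map_is_linear Y : linear (codeword_map Y).
Proof.
move=> a u v; congr (_, _); apply/ffunP=> i; rewrite !ffunE /=.
by rewrite mulrDl -scalerAl mulrDl -scalerAl linearP.
Qed.

HB.instance Definition _ Y := GRing.isLinear.Build F L ambient _ (codeword_map Y)
  (codeword_map_is_linear Y).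

Definition codeword Y : {vspace ambient} := limg (linfun (codeword_map Y)).

Lemma memv_codeword Y w : reflect (exists u, w = codeword_map Y u) (w \in codeword Y).
Proof.
apply: (iffP memv_imgP) => [[u _ ->]|[u ->]]; exists u; rewrite ?lfunE ?memvf //.
Qed.

Lemma lker_codeword_map Y : lker (linfun (codeword_map Y)) == 0%VS.
Proof. by apply/lker0P=> u v; rewrite !lfunE => -[]. Qed.

Lemma dim_codeword Y : \dim (codeword Y) = \dim {:L}.
Proof. by rewrite limg_dim_eq // (eqP (lker_codeword_map Y)) capv0. Qed.

Lemma codeword_inj : injective codeword.
Proof.
move=> Y1 Y2 eqU; have : codeword_map Y1 1 \in codeword Y2.
  by rewrite -eqU; apply/memv_codeword; exists 1.
case/memv_codeword=> c [<- /ffunP eqY]; apply/ffunP=> i.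
by have := eqY i; rewrite !ffunE !mul1r => -[].
Qed.

Lemma codeword_mapD_eq Y1 Y2 Y3 a b c :
  codeword_map Y1 a + codeword_map Y2 b = codeword_map Y3 c ->
  a + b = c /\ forall i, a * Y1 i + b * Y2 i = c * Y3 i /\
     pi (a * Y1 i ^+ 2) + pi (b * Y2 i ^+ 2) = pi (c * Y3 i ^+ 2).
Proof. by case=> -> /ffunP eqY; split=> // i; have := eqY i; rewrite !ffunE => -[-> ->]. Qed.

Lemma mem_codeword_cap_sum Y1 Y2 Y3 w :
  w \in ((codeword Y1 + codeword Y2) :&: codeword Y3)%VS ->
  exists a b c, codeword_map Y1 a + codeword_map Y2 b = codeword_map Y3 c /\
                w = codeword_map Y3 c.
Proof.
rewrite memv_cap => /andP[/memv_addP[_ /memv_codeword[a ->] [_ /memv_codeword[b ->] ->]]].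
by case/memv_codeword=> c eq_w; exists a, b, c.
Qed.

Lemma codeword_cap0 Y1 Y2 i : Y1 i != Y2 i -> (codeword Y1 :&: codeword Y2 = 0)%VS.
Proof.
move=> neq12; apply/eqP; rewrite -subv0; apply/subvP=> w.
rewrite memv_cap memv0 => /andP[/memv_codeword[a ->] /memv_codeword[c]].
case=> <- /ffunP /(_ i); rewrite !ffunE => -[/eqP].
rewrite -subr_eq0 -mulrBr mulf_eq0 subr_eq0 (negPf neq12) orbF => /eqP-> _.
by rewrite linear0.
Qed.

Lemma codeword_cap_sum0 Y1 Y2 Y3 i :
  Y1 != Y3 -> Y3 i = Y1 i -> Y1 i != Y2 i ->
  ((codeword Y1 + codeword Y2) :&: codeword Y3 = 0)%VS.
Proof.
move=> /ffunPn[i1 neq13] eq31 neq12; apply/eqP; rewrite -subv0.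
apply/subvP=> _ /mem_codeword_cap_sum[a [b [c [eq_abc ->]]]].
have [sum_abc mean] := codeword_mapD_eq eq_abc.
have cancel (x y z : L) : x * (y - z) = 0 -> y != z -> x = 0.
  by move/eqP; rewrite mulf_eq0 subr_eq0 => /orP[/eqP|->].
have b0 : b = 0.
  apply: (cancel b (Y1 i) (Y2 i)) => //.
  have -> : b * (Y1 i - Y2 i) = (a + b) * Y1 i - (a * Y1 i + b * Y2 i) by ring.
  by rewrite (mean i).1 sum_abc eq31 subrr.
have c0 : c = 0.
  apply: (cancel c (Y1 i1) (Y3 i1)) => //.
  by rewrite mulrBr -{1}sum_abc b0 addr0 -(mean i1).1 b0 mul0r addr0 subrr.
by rewrite c0 linear0 memv0.
Qed.

Lemma dim_codeword_cap_sum Y1 Y2 Y3 i : Y1 i != Y3 i -> Y3 i != Y2 i ->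
  (\dim ((codeword Y1 + codeword Y2) :&: codeword Y3) <= \dim (lker pi))%N.
Proof.
move=> neq13 neq32; set e := (Y1 i - Y3 i) * (Y3 i - Y2 i).
have e_neq0 : e != 0 by rewrite mulf_neq0 // subr_eq0.
pose f := (linfun (codeword_map Y3) \o amulr e^-1%R)%VF.
have sub_cap : ((codeword Y1 + codeword Y2) :&: codeword Y3 <= f @: lker pi)%VS.
  apply/subvP=> _ /mem_codeword_cap_sum[a [b [c [eq_abc ->]]]].
  have [sum_abc mean] := codeword_mapD_eq eq_abc.
  apply/memv_imgP; exists (c * e); last by rewrite comp_lfunE !lfunE /= mulfK.
  rewrite memv_ker -(weighted_square_defect sum_abc (mean i).1).
  by rewrite raddfB raddfD (mean i).2 subrr.
apply: leq_trans (dimvS sub_cap) _.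
by rewrite -(limg_ker_dim f (lker pi)) leq_addl.
Qed.

Hypothesis pi_onto : limg pi = fullv.

Lemma dim_lker_onto : (\dim (lker pi) + \dim {:V} = \dim {:L})%N.
Proof. by rewrite -(limg_ker_dim pi fullv) capfv pi_onto. Qed.

Lemma dim_codeword_triple Y1 Y2 Y3 : Y1 != Y2 -> Y2 != Y3 -> Y1 != Y3 ->
  (2 * \dim {:L} + \dim {:V} <= \dim (codeword Y1 + codeword Y2 + codeword Y3))%N.
Proof.
move=> neq12 neq23 neq13; have /ffunPn[i neq12_i] := neq12.
have dim12 : \dim (codeword Y1 + codeword Y2) = (2 * \dim {:L})%N.
  have := dimv_sum_cap (codeword Y1) (codeword Y2).
  by rewrite (codeword_cap0 neq12_i) dimv0 addn0 !dim_codeword mul2n addnn.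
have := dimv_sum_cap (codeword Y1 + codeword Y2) (codeword Y3).
rewrite dim12 dim_codeword -dim_lker_onto.
suff : (\dim ((codeword Y1 + codeword Y2) :&: codeword Y3) <= \dim (lker pi))%N by lia.
have [eq31|neq31] := eqVneq (Y3 i) (Y1 i).
  by rewrite (codeword_cap_sum0 neq13 eq31 neq12_i) dimv0.
have [eq32|neq32] := eqVneq (Y3 i) (Y2 i).
  by rewrite addvC (codeword_cap_sum0 (i := i)) ?dimv0 // eq_sym.
by apply: (dim_codeword_cap_sum (i := i)); rewrite // eq_sym.
Qed.
End Codewords.

Section Code.
Variables (F : finFieldType) (L : fieldExtType F) (V : vectType F).
Variables (pi : 'Hom(L, V)) (j n : nat).

Definition code : seq {vspace 'rV[F]_n} :=
  [seq (resize_coord (ambient L V j) n @: codeword pi Y)%VS | Y : {ffun 'I_j -> finvect_type L}].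

Lemma size_code : size code = (#|F| ^ (\dim {:L} * j))%N.
Proof.
rewrite size_map -cardE card_ffun card_ord expnM.
by rewrite -(card_vspace (fullv : {vspace finvect_type L})) card_vspacef.
Qed.

Hypothesis le_ambient : (\dim {:ambient L V j} <= n)%N.
Let lker_embed := lker_resize_coord le_ambient.

Lemma uniq_code : uniq code.
Proof.
rewrite map_inj_uniq ?enum_uniq // => Y1 Y2 /eqP.
by rewrite (eq_limg_ker0 _ _ lker_embed) => /eqP/codeword_inj.
Qed.

Lemma dim_code U : U \in code -> \dim U = \dim {:L}.
Proof.
by case/mapP=> Y _ ->; rewrite limg_dim_eq ?dim_codeword // (eqP lker_embed) capv0.
Qed.

Lemma covering_code_code : limg pi = fullv ->
  @covering_code F n (\dim {:L}) (\dim {:L} + \dim {:V})%N 3 code.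
Proof.
move=> pi_onto; split=> [||S]; [exact: uniq_code | exact: dim_code |].
case: S => [|U1 [|U2 [|U3 []]]] //= + _ sub_code.
have /mapP[Y1 _ ->] : U1 \in code by apply: sub_code; rewrite inE eqxx.
have /mapP[Y2 _ ->] : U2 \in code by apply: sub_code; rewrite !inE eqxx orbT.
have /mapP[Y3 _ ->] : U3 \in code by apply: sub_code; rewrite !inE eqxx !orbT.
rewrite !inE !negb_or => /and3P[/andP[neq12 neq13] neq23 _].
have neqY (Y Y' : {ffun 'I_j -> L}) :
  (resize_coord _ n @: codeword pi Y != resize_coord _ n @: codeword pi Y')%VS -> Y != Y'.
  by apply: contraNneq => ->.
rewrite !big_cons big_nil addv0 -!limgD limg_dim_eq; last first.
  by rewrite (eqP lker_embed) capv0.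
by rewrite addnA addnn -mul2n addvA dim_codeword_triple ?neqY.
Qed.
End Code.

Theorem mainTheorem13 (F : finFieldType) (q n k gamma : nat) :
  #|F| = q -> (0 < n)%N -> (0 < k)%N -> (0 < gamma)%N ->
  (2 * k + gamma <= n)%N ->
  exists C : seq {vspace 'rV[F]_n},
    @covering_code F n k (k + gamma) 3 C /\
    (q ^ (((n - 2 * k + 1) %/ (k + 1)) * (k %/ gamma)) <= size C)%N.
Proof.
move=> cardF _ k_gt0 gamma_gt0 le_n.
have [L dimL] := fieldExt_of_dim F k_gt0.
pose pi := resize_coord L gamma.
have [le_gk | lt_kg] := leqP gamma k; last first.
  have le_ambient : (\dim {:ambient L 'rV[F]_gamma 0} <= n)%N.
    by rewrite dim_ambient dimL; lia.
  exists (code pi 0 n); split; last by rewrite size_code (divn_small lt_kg) !muln0.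
  apply: covering_code_small; rewrite ?uniq_code ?size_code ?muln0 //.
  by move=> U /dim_code ->.
pose j := ((n - k) %/ (k + gamma))%N.
have le_ambient : (\dim {:ambient L 'rV[F]_gamma j} <= n)%N.
  by rewrite dim_ambient dimL dim_rV; have := leq_trunc_div (n - k) (k + gamma); lia.
exists (code pi j n); split.
  have pi_onto : limg pi = fullv by rewrite limg_resize_coord ?dimL.
  by have := covering_code_code le_ambient pi_onto; rewrite dimL dim_rV.
rewrite size_code -cardF dimL leq_pexp2l ?leq_code_exponent //.
exact: ltnW (finNzRing_gt1 F).
Qed.
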